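(* Let $(C,f,P,Q)$ be a quadratic morphism over a field $K$ of characteristic $\ne2$. The following are equivalent: (a) the postcritical orbit $\{f^n(P),f^n(Q)\mid n\ge1\}$ has cardinality $\ge3$; (b) at least one of $f(P)$, $f(Q)$ is distinct from both $P$ and $Q$; (c) $(C,f,P,Q)$ is not isomorphic to $(\mathbb{P}^1_K,\ x\mapsto ax^{\pm2},\ 0,\ \infty)$ for any choice of sign and any $a\in K^\times$. Moreover, these conditions imply that the automorphism group of $(C,f,P,Q)$ is trivial.
   Context: A quadratic morphism over a scheme $S$ (over $\mathrm{Spec}\,\mathbb{Z}[\tfrac12]$) is a quadruple $(C,f,P,Q)$ where $C$ is a curve over $S$ that is Zariski-locally on $S$ isomorphic to $\mathbb{P}^1\times S$, $f\colon C\to C$ is an $S$-morphism of degree $2$ on every fiber, and $P,Q\in C(S)$ are sections whose images are precisely the critical points of $f$ (the points where $df=0$). Isomorphisms (and automorphisms) of quadratic morphisms are isomorphisms of curves over $S$ commuting with the maps and sending $P$ to $P'$ and $Q$ to $Q'$. $f^n$ denotes the $n$-th iterate of $f$. *)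

(* Quadratic morphisms over a field K, with C = P^1_K
   described in homogeneous coordinates. *)
From mathcomp Require Import all_boot all_algebra.
Set Implicit Arguments. Unset Strict Implicit. Unset Printing Implicit Defensive.
Import GRing.Theory.
Local Open Scope ring_scope.

Section QuadMorph.
Variable K : fieldType.

(* points of P^1(K): homogeneous coordinates (X, Y), required nonzero *)
Definition pt := (K * K)%type.
Definition pnz (p : pt) : bool := p != (0, 0).
(* equality of points of P^1 (for nonzero representatives) *)
Definition peq (p q : pt) : bool := p.1 * q.2 == p.2 * q.1.

Record bform := BF { bxx : K; bxy : K; byy : K }.
Record lform := LF { lx : K; ly : K }.

Definition bf_eval (F : bform) (p : pt) : K :=
  bxx F * p.1 ^+ 2 + bxy F * p.1 * p.2 + byy F * p.2 ^+ 2.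
Definition lf_eval (l : lform) (p : pt) : K := lx l * p.1 + ly l * p.2.

Definition bf_add (F G : bform) := BF (bxx F + bxx G) (bxy F + bxy G) (byy F + byy G).
Definition bf_scale (c : K) (F : bform) := BF (c * bxx F) (c * bxy F) (c * byy F).
Definition bf_sub (F G : bform) := bf_add F (bf_scale (-1) G).
Definition lmul (l m : lform) :=
  BF (lx l * lx m) (lx l * ly m + ly l * lx m) (ly l * ly m).

Definition dX (F : bform) := LF (2%:R * bxx F) (bxy F).
Definition dY (F : bform) := LF (bxy F) (2%:R * byy F).
(* Jacobian determinant F_X G_Y - F_Y G_X: its zeros are the critical points
   of the map [F : G] *)
Definition jac (F G : bform) := bf_sub (lmul (dX F) (dY G)) (lmul (dY F) (dX G)).

Definition vanish_lf (p : pt) := LF p.2 (- p.1).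

(* resultant of two binary quadratic forms (Sylvester) *)
Definition bres (F G : bform) : K :=
  let a0 := bxx F in let a1 := bxy F in let a2 := byy F in
  let b0 := bxx G in let b1 := bxy G in let b2 := byy G in
  (a0 * b2 - a2 * b0) ^+ 2 - (a0 * b1 - a1 * b0) * (a1 * b2 - a2 * b1).

(* an endomorphism of P^1 of degree <= 2, given by (X:Y) |-> (F : G) *)
Record qmap := QM { qF : bform; qG : bform }.
Definition qapply (f : qmap) (p : pt) : pt := (bf_eval (qF f) p, bf_eval (qG f) p).

(* (P^1_K, f, P, Q) is a quadratic morphism: f has degree exactly 2
   (F, G without common zero, i.e. nonzero resultant), P, Q are points and
   the critical locus {jac F G = 0} is exactly {P, Q}, i.e. the Jacobian is a
   nonzero multiple of the product of the linear forms vanishing at P, Q. *)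
Definition is_quad_morphism (f : qmap) (P Q : pt) : Prop :=
  [/\ pnz P, pnz Q, bres (qF f) (qG f) != 0 &
      exists c : K, c != 0 /\
        jac (qF f) (qG f) = bf_scale c (lmul (vanish_lf P) (vanish_lf Q))].

(* linear automorphisms of P^1 (elements of GL_2(K)) *)
Record lmap := LM { m1 : lform; m2 : lform }.
Definition lm_apply (M : lmap) (p : pt) : pt := (lf_eval (m1 M) p, lf_eval (m2 M) p).
Definition lm_det (M : lmap) : K := lx (m1 M) * ly (m2 M) - ly (m1 M) * lx (m2 M).

Definition lm_after (M : lmap) (f : qmap) : qmap :=
  QM (bf_add (bf_scale (lx (m1 M)) (qF f)) (bf_scale (ly (m1 M)) (qG f)))
     (bf_add (bf_scale (lx (m2 M)) (qF f)) (bf_scale (ly (m2 M)) (qG f))).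
Definition bf_subst (F : bform) (M : lmap) : bform :=
  bf_add (bf_add (bf_scale (bxx F) (lmul (m1 M) (m1 M)))
                 (bf_scale (bxy F) (lmul (m1 M) (m2 M))))
         (bf_scale (byy F) (lmul (m2 M) (m2 M))).
Definition qm_before (g : qmap) (M : lmap) : qmap :=
  QM (bf_subst (qF g) M) (bf_subst (qG g) M).
(* equality of morphisms P^1 -> P^1: the defining forms are proportional *)
Definition qm_equiv (f g : qmap) : Prop :=
  exists l : K, l != 0 /\ qF f = bf_scale l (qF g) /\ qG f = bf_scale l (qG g).

Definition qm_iso (M : lmap) (f : qmap) (P Q : pt) (g : qmap) (P' Q' : pt) : Prop :=
  [/\ lm_det M != 0, qm_equiv (lm_after M f) (qm_before g M),
      peq (lm_apply M P) P' & peq (lm_apply M Q) Q'].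

(* the standard maps x |-> a x^2 (s = true) and x |-> a x^-2 (s = false),
   x = X/Y, with 0 = (0:1), oo = (1:0) *)
Definition std_map (a : K) (s : bool) : qmap :=
  if s then QM (BF a 0 0) (BF 0 0 1) else QM (BF 0 0 a) (BF 1 0 0).
Definition zero_pt : pt := (0, 1).
Definition inf_pt : pt := (1, 0).

Definition in_postcrit (f : qmap) (P Q z : pt) : Prop :=
  exists n : nat, (1 <= n)%N /\
    (peq z (iter n (qapply f) P) \/ peq z (iter n (qapply f) Q)).
Definition postcrit_ge3 (f : qmap) (P Q : pt) : Prop :=
  exists z1 z2 z3 : pt,
    [/\ in_postcrit f P Q z1, in_postcrit f P Q z2 & in_postcrit f P Q z3] /\
    [/\ ~~ peq z1 z2, ~~ peq z1 z3 & ~~ peq z2 z3].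

Definition cond_b (f : qmap) (P Q : pt) : bool :=
  (~~ peq (qapply f P) P && ~~ peq (qapply f P) Q) ||
  (~~ peq (qapply f Q) P && ~~ peq (qapply f Q) Q).

Definition is_standard (f : qmap) (P Q : pt) : Prop :=
  exists (a : K) (s : bool) (M : lmap),
    a != 0 /\ qm_iso M f P Q (std_map a s) zero_pt inf_pt.

(* trivial automorphism group: every automorphism is a scalar matrix *)
Definition aut_trivial (f : qmap) (P Q : pt) : Prop :=
  forall M : lmap, qm_iso M f P Q f P Q ->
    [/\ ly (m1 M) = 0, lx (m2 M) = 0 & lx (m1 M) = ly (m2 M)].

End QuadMorph.

From mathcomp Require Import all_boot all_algebra ring.
Set Implicit Arguments. Unset Strict Implicit. Unset Printing Implicit Defensive.
Import GRing.Theory.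
Local Open Scope ring_scope.

(* Compare points of P^1 through the determinant [dlt x y = x1 y2 - x2 y1].
   Polarising the Jacobian condition gives
     4 dlt (f x) (f y) = c dlt x y (dlt x P dlt y Q + dlt y P dlt x Q),
   so f has no base points, f P <> f Q, and f x = f P (resp. f Q) only for
   x = P (resp. Q).  If f P (say) avoids P and Q, then f P, f Q and f (f P)
   are three distinct postcritical points; otherwise {P, Q} is invariant and
   the postcritical set has at most two points.  In the coordinates
   u = dlt x P, v = dlt x Q both components of f are combinations of u^2 and
   v^2 only, so an invariant {P, Q} makes f conjugate to x |-> a x^(+-2).
   Finally an automorphism fixes every postcritical point, and a Moebius
   transformation with three fixed points is the identity. *)

Section Projective.
Variable K : fieldType.
Implicit Types (p q r x y : pt K) (M : lmap K).

Definition dlt p q : K := p.1 * q.2 - p.2 * q.1.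

Lemma peqE p q : peq p q = (dlt p q == 0).
Proof. by rewrite /peq /dlt subr_eq0. Qed.

Lemma peq_dlt p q : peq p q -> dlt p q = 0.
Proof. by rewrite peqE => /eqP. Qed.

Lemma dltxx p : dlt p p = 0.
Proof. by rewrite /dlt mulrC subrr. Qed.

Lemma dltC p q : dlt q p = - dlt p q.
Proof. by rewrite /dlt opprB mulrC [q.2 * _]mulrC. Qed.

Lemma peq_refl p : peq p p.
Proof. by rewrite peqE dltxx. Qed.

Lemma peq_sym p q : peq p q = peq q p.
Proof. by rewrite !peqE dltC oppr_eq0. Qed.

Lemma peq_trans q p r : pnz q -> peq p q -> peq q r -> peq p r.
Proof.
rewrite !peqE => hq /eqP hpq /eqP hqr.
have e1 : q.1 * dlt p r = p.1 * dlt q r + r.1 * dlt p q by rewrite /dlt; ring.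
have e2 : q.2 * dlt p r = p.2 * dlt q r + r.2 * dlt p q by rewrite /dlt; ring.
rewrite hpq hqr !mulr0 addr0 in e1 e2.
move: hq; rewrite /pnz [q]surjective_pairing xpair_eqE negb_and.
by case/orP=> hq; [move: e1 | move: e2] => /eqP; rewrite mulf_eq0 (negbTE hq).
Qed.

Lemma dlt_lm_apply M x y :
  dlt (lm_apply M x) (lm_apply M y) = lm_det M * dlt x y.
Proof. by rewrite /dlt /lm_apply /lf_eval /lm_det /=; ring. Qed.

Lemma peq_lm_apply M x y :
  lm_det M != 0 -> peq (lm_apply M x) (lm_apply M y) = peq x y.
Proof. by move=> hM; rewrite !peqE dlt_lm_apply mulf_eq0 (negbTE hM). Qed.

Lemma pnz_lm_apply M x : lm_det M != 0 -> pnz x -> pnz (lm_apply M x).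
Proof.
move=> hM; apply: contra_neq => hMx.
have hx y : dlt x y = 0.
  have : dlt (0, 0) (lm_apply M y) = 0 by rewrite /dlt /= !mul0r subrr.
  by rewrite -hMx dlt_lm_apply => /eqP; rewrite mulf_eq0 (negbTE hM) => /eqP.
by move: (hx (0, 1)) (hx (1, 0)); rewrite [x]surjective_pairing /dlt /=;
  rewrite !mulr0 !mulr1 subr0 sub0r => -> /eqP; rewrite oppr_eq0 => /eqP ->.
Qed.

Lemma lm_apply_vanish P Q x :
  lm_apply (LM (vanish_lf P) (vanish_lf Q)) x = (dlt x P, dlt x Q).
Proof. by rewrite /lm_apply /lf_eval /dlt /=; congr pair; ring. Qed.

Lemma lm_det_vanish P Q : lm_det (LM (vanish_lf P) (vanish_lf Q)) = dlt P Q.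
Proof. by rewrite /lm_det /dlt /=; ring. Qed.

End Projective.

Section Forms.
Variable K : fieldType.
Implicit Types (F G H : bform K) (M : lmap K) (f : qmap K) (x y P Q : pt K).

Definition bf_polar H x y : K :=
  2%:R * bxx H * x.1 * y.1 + bxy H * (x.1 * y.2 + x.2 * y.1) + 2%:R * byy H * x.2 * y.2.

Definition bf_disc H : K := bxy H ^+ 2 - 4%:R * bxx H * byy H.

Definition crit_form (c : K) P Q : bform K := bf_scale c (lmul (vanish_lf P) (vanish_lf Q)).

Lemma bf_eval_scale k H x : bf_eval (bf_scale k H) x = k * bf_eval H x.
Proof. by rewrite /bf_eval /=; ring. Qed.

Lemma bf_eval_subst H M x : bf_eval (bf_subst H M) x = bf_eval H (lm_apply M x).
Proof. by rewrite /bf_eval /lm_apply /lf_eval /=; ring. Qed.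

Lemma bf_subst_scale k H M : bf_subst (bf_scale k H) M = bf_scale k (bf_subst H M).
Proof. by rewrite /bf_subst /bf_add /bf_scale /lmul /=; congr BF; ring. Qed.

Lemma lm_apply_qapply M f x : lm_apply M (qapply f x) = qapply (lm_after M f) x.
Proof. by rewrite /lm_apply /lf_eval /qapply /bf_eval /=; congr pair; ring. Qed.

Lemma bf_eval_crit_form c P Q x : bf_eval (crit_form c P Q) x = c * dlt x P * dlt x Q.
Proof. by rewrite /bf_eval /dlt /=; ring. Qed.

Lemma bf_polar_crit_form c P Q x y :
  bf_polar (crit_form c P Q) x y = c * (dlt x P * dlt y Q + dlt y P * dlt x Q).
Proof. by rewrite /bf_polar /dlt /=; ring. Qed.

Lemma bf_disc_crit_form c P Q : bf_disc (crit_form c P Q) = (c * dlt P Q) ^+ 2.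
Proof. by rewrite /bf_disc /dlt /=; ring. Qed.

Lemma bf_disc_jac F G : bf_disc (jac F G) = 16%:R * bres F G.
Proof. by case: F G => a0 a1 a2 [b0 b1 b2]; rewrite /bf_disc /bres /=; ring. Qed.

(* [x = (dlt x Q * P - dlt x P * Q) / dlt P Q], expanded in [H]. *)
Lemma bf_interpolate H P Q :
  bf_scale (dlt P Q ^+ 2) H =
  bf_subst (BF (bf_eval H Q) (- bf_polar H P Q) (bf_eval H P)) (LM (vanish_lf P) (vanish_lf Q)).
Proof.
case: H P Q => h0 h1 h2 [p1 p2] [q1 q2].
by rewrite /bf_subst /bf_add /bf_scale /lmul /bf_eval /bf_polar /dlt /=; congr BF; ring.
Qed.

Lemma dlt_qapply f x y :
  4%:R * dlt (qapply f x) (qapply f y) = dlt x y * bf_polar (jac (qF f) (qG f)) x y.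
Proof.
case: f x y => [[a0 a1 a2] [b0 b1 b2]] [x1 x2] [y1 y2].
by rewrite /qapply /bf_eval /bf_polar /dlt /=; ring.
Qed.

(* So if [jac F G] vanishes at P and Q with nonzero polar value there, every
   combination of F and G has zero polar value at (P, Q). *)
Lemma bf_polar_jac a b F G P Q :
  let H := bf_add (bf_scale a F) (bf_scale b G) in
  bf_polar H P Q * bf_polar (jac F G) P Q =
  2%:R * (bf_eval H Q * bf_eval (jac F G) P + bf_eval H P * bf_eval (jac F G) Q).
Proof.
case: F G P Q => a0 a1 a2 [b0 b1 b2] [p1 p2] [q1 q2].
by rewrite /bf_eval /bf_polar /=; ring.
Qed.

Lemma bf_eq0_of_roots H z w t :
  ~~ peq z w -> ~~ peq z t -> ~~ peq w t ->
  bf_eval H z = 0 -> bf_eval H w = 0 -> bf_eval H t = 0 -> H = BF 0 0 0.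
Proof.
rewrite !peqE => hzw hzt hwt Hz Hw Ht.
have hH := bf_interpolate H z w; rewrite Hz Hw in hH.
have hpol : bf_polar H z w = 0.
  have := congr1 (fun B => bf_eval B t) hH.
  rewrite bf_eval_scale bf_eval_subst lm_apply_vanish Ht mulr0 /bf_eval /=.
  rewrite !mul0r add0r addr0 => /esym/eqP.
  rewrite !mulf_eq0 oppr_eq0 (dltC z t) (dltC w t) !oppr_eq0.
  by rewrite (negbTE hzt) (negbTE hwt) !orbF => /eqP.
have hd : dlt z w ^+ 2 != 0 by rewrite expf_neq0.
move: hH; rewrite hpol oppr0; case: H {Hz Hw Ht hpol} => h0 h1 h2.
rewrite /bf_subst /bf_scale /= => -[e0 e1 e2]; congr BF; apply: (mulfI hd);
  by rewrite ?e0 ?e1 ?e2; ring.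
Qed.

End Forms.

Section Isomorphisms.
Variable K : fieldType.
Implicit Types (H : bform K) (M : lmap K) (f g : qmap K) (x y P Q : pt K).

Lemma bf_scale_solve k1 k2 H H' :
  k1 != 0 -> bf_scale k1 H = bf_scale k2 H' -> H = bf_scale (k2 / k1) H'.
Proof.
case: H H' => h0 h1 h2 [h0' h1' h2'] hk [e0 e1 e2].
by rewrite /bf_scale /=; congr BF; apply: (mulfI hk); rewrite ?e0 ?e1 ?e2; field.
Qed.

Lemma qm_equiv_scale k1 k2 g h :
  k1 != 0 -> k2 != 0 -> bf_scale k1 (qF g) = bf_scale k2 (qF h) ->
  bf_scale k1 (qG g) = bf_scale k2 (qG h) -> qm_equiv g h.
Proof.
move=> hk1 hk2 eF eG; exists (k2 / k1); split; first by rewrite mulf_neq0 ?invr_eq0.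
by split; apply: bf_scale_solve.
Qed.

Lemma qm_equiv_dlt M f g : qm_equiv (lm_after M f) (qm_before g M) ->
  exists2 l : K, l != 0 & forall x y,
    dlt (lm_apply M (qapply f x)) y = l * dlt (qapply g (lm_apply M x)) y.
Proof.
case=> l [hl [eF eG]]; exists l => // x y.
rewrite lm_apply_qapply /qapply eF eG !bf_eval_scale !bf_eval_subst.
by rewrite /dlt /=; ring.
Qed.

Lemma peq_qapply_iso M f g x y :
  lm_det M != 0 -> qm_equiv (lm_after M f) (qm_before g M) ->
  peq (qapply f x) y = peq (qapply g (lm_apply M x)) (lm_apply M y).
Proof.
move=> hM /qm_equiv_dlt [l hl e].
by rewrite -(peq_lm_apply _ _ hM) !peqE e mulf_eq0 (negbTE hl).
Qed.

Lemma standard_not_cond_b f P Q : is_standard f P Q -> ~~ cond_b f P Q.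
Proof.
case=> a [s [M [_ [hM hiso hMP hMQ]]]].
rewrite /cond_b !(peq_qapply_iso _ _ hM hiso).
move: (lm_apply M P) (lm_apply M Q) hMP hMQ => [p1 p2] [q1 q2].
rewrite /peq /= !mulr1 !mulr0 => /eqP -> /eqP <-.
by case: s {hiso}; rewrite /std_map /qapply /bf_eval /peq /= negb_or !negb_and !negbK;
  apply/andP; split; apply/orP; [left | right | right | left]; apply/eqP; ring.
Qed.

End Isomorphisms.

Lemma lm_scalar_of_fixed3 (K : fieldType) (M : lmap K) (z w t : pt K) :
  ~~ peq z w -> ~~ peq z t -> ~~ peq w t ->
  peq (lm_apply M z) z -> peq (lm_apply M w) w -> peq (lm_apply M t) t ->
  [/\ ly (m1 M) = 0, lx (m2 M) = 0 & lx (m1 M) = ly (m2 M)].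
Proof.
case: M => [[a b] [c e]] hzw hzt hwt hz hw ht /=.
have ev x : dlt (lm_apply (LM (LF a b) (LF c e)) x) x = bf_eval (BF (- c) (a - e) b) x.
  by rewrite /dlt /bf_eval /lm_apply /lf_eval /=; ring.
have := @bf_eq0_of_roots _ (BF (- c) (a - e) b) _ _ _ hzw hzt hwt.
rewrite -!ev !peq_dlt // => /(_ erefl erefl erefl).
by case=> /eqP; rewrite oppr_eq0 => /eqP -> /eqP; rewrite subr_eq0 => /eqP -> ->.
Qed.

Lemma peq_pigeonhole (K : fieldType) (P Q z1 z2 z3 : pt K) : pnz P -> pnz Q ->
  peq z1 P || peq z1 Q -> peq z2 P || peq z2 Q -> peq z3 P || peq z3 Q ->
  [|| peq z1 z2, peq z1 z3 | peq z2 z3].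
Proof.
move=> hP hQ h1 h2 h3.
have same a b : peq a P || peq a Q -> peq b P || peq b Q -> peq a P = peq b P -> peq a b.
  case: (boolP (peq a P)) (boolP (peq b P)) => [aP|naP] [bP|nbP] //= aQ bQ _.
    by apply: peq_trans hP aP _; rewrite peq_sym.
  by apply: peq_trans hQ aQ _; rewrite peq_sym.
move: (same _ _ h1 h2) (same _ _ h1 h3) (same _ _ h2 h3).
case: (peq z1 P) (peq z2 P) (peq z3 P) => [] [] [] e12 e13 e23; apply/or3P.
all: first [exact: Or31 (e12 erefl) | exact: Or32 (e13 erefl) | exact: Or33 (e23 erefl)].
Qed.

Section QuadMorphism.
Variables (K : fieldType) (f : qmap K) (P Q : pt K) (c : K).
Hypotheses (two_neq0 : (2%:R : K) != 0) (hP : pnz P) (hQ : pnz Q)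
  (hres : bres (qF f) (qG f) != 0) (hc : c != 0)
  (hjac : jac (qF f) (qG f) = crit_form c P Q).
Implicit Types (x y z : pt K).

Local Notation fP := (qapply f P).
Local Notation fQ := (qapply f Q).

Let four_neq0 : (4%:R : K) != 0.
Proof. by rewrite (natrM K 2 2) mulf_neq0. Qed.

Lemma crit_dlt_neq0 : dlt P Q != 0.
Proof.
apply: contra hres => /eqP d0.
have := bf_disc_jac (qF f) (qG f); rewrite hjac bf_disc_crit_form d0 mulr0 expr0n /=.
by move/esym/eqP; rewrite mulf_eq0 (natrM K 4 4) mulf_eq0 (negbTE four_neq0).
Qed.

Lemma dlt_qapply_crit x y :
  4%:R * dlt (qapply f x) (qapply f y) = c * dlt x y * (dlt x P * dlt y Q + dlt y P * dlt x Q).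
Proof. by rewrite dlt_qapply hjac bf_polar_crit_form mulrCA mulrA. Qed.

Lemma dlt_qapply_eq0 x y :
  (dlt (qapply f x) (qapply f y) == 0) =
  (dlt x y * (dlt x P * dlt y Q + dlt y P * dlt x Q) == 0).
Proof.
rewrite -(mulrI_eq0 _ (mulfI four_neq0)) dlt_qapply_crit -mulrA.
by rewrite mulf_eq0 (negbTE hc).
Qed.

Lemma qapply_peq x y : peq x y -> peq (qapply f x) (qapply f y).
Proof. by rewrite !peqE dlt_qapply_eq0 => /eqP ->; rewrite mul0r. Qed.

Lemma peq_qapply_critP x : peq (qapply f x) fP = peq x P.
Proof.
by rewrite !peqE dlt_qapply_eq0 dltxx mul0r addr0 !mulf_eq0 (negbTE crit_dlt_neq0) orbF orbb.
Qed.

Lemma peq_qapply_critQ x : peq (qapply f x) fQ = peq x Q.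
Proof.
rewrite !peqE dlt_qapply_eq0 dltxx mulr0 add0r !mulf_eq0 (dltC P Q) oppr_eq0.
by rewrite (negbTE crit_dlt_neq0) /= orbb.
Qed.

Lemma crit_values_neq : ~~ peq fP fQ.
Proof. by rewrite peq_qapply_critQ peqE crit_dlt_neq0. Qed.

Lemma qapply_pnz x : pnz x -> pnz (qapply f x).
Proof.
move=> hx; apply/negP => /eqP hfx.
have hf0 y : peq (qapply f x) (qapply f y) by rewrite hfx peqE /dlt /= !mul0r subrr.
move: (hf0 P) (hf0 Q); rewrite peq_qapply_critP peq_qapply_critQ peq_sym => xP xQ.
by move: (peq_trans hx xP xQ); rewrite peqE (negbTE crit_dlt_neq0).
Qed.

Lemma iter_qapply_pnz n x : pnz x -> pnz (iter n (qapply f) x).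
Proof. by move=> hx; elim: n => //= n; apply: qapply_pnz. Qed.

Lemma peq_both_crit u : pnz u -> peq u P -> peq u Q -> False.
Proof.
move=> hu uP uQ; move: (peq_trans hu (etrans (peq_sym _ _) uP) uQ).
by rewrite peqE (negbTE crit_dlt_neq0).
Qed.

Lemma bf_polar_crit_comb a b :
  bf_polar (bf_add (bf_scale a (qF f)) (bf_scale b (qG f))) P Q = 0.
Proof.
have /= := bf_polar_jac a b (qF f) (qG f) P Q.
rewrite hjac !bf_eval_crit_form bf_polar_crit_form !dltxx !mulr0 !mul0r !add0r !mulr0.
rewrite addr0 mulr0 => /eqP; rewrite !mulf_eq0 (dltC P Q) oppr_eq0 (negbTE hc).
by rewrite (negbTE crit_dlt_neq0) !orbF => /eqP.
Qed.

Let N := LM (vanish_lf P) (vanish_lf Q).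

Lemma after_vanish_diag :
  bf_scale (dlt P Q ^+ 2) (qF (lm_after N f)) = bf_subst (BF (dlt fQ P) 0 (dlt fP P)) N /\
  bf_scale (dlt P Q ^+ 2) (qG (lm_after N f)) = bf_subst (BF (dlt fQ Q) 0 (dlt fP Q)) N.
Proof.
have ev x : dlt (qapply f x) P = bf_eval (qF (lm_after N f)) x /\
            dlt (qapply f x) Q = bf_eval (qG (lm_after N f)) x.
  by have := lm_apply_qapply N f x; rewrite lm_apply_vanish => -[-> ->].
by rewrite !bf_interpolate !bf_polar_crit_comb oppr0 !(proj1 (ev _)) !(proj2 (ev _)).
Qed.

Lemma not_cond_b_standard : ~~ cond_b f P Q -> is_standard f P Q.
Proof.
rewrite /cond_b negb_or !negb_and !negbK => /andP [hfP hfQ].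
have [eF eG] := after_vanish_diag.
have hN : lm_det N != 0 by rewrite lm_det_vanish crit_dlt_neq0.
have NP : peq (lm_apply N P) (zero_pt K) by rewrite lm_apply_vanish dltxx /peq /= mul0r mulr0.
have NQ : peq (lm_apply N Q) (inf_pt K) by rewrite lm_apply_vanish dltxx /peq /= mul0r mulr0.
have hd2 : dlt P Q ^+ 2 != 0 := expf_neq0 2 crit_dlt_neq0.
have fPQ : ~~ peq fP fQ := crit_values_neq.
case/orP: hfP => hfP; case/orP: hfQ => hfQ.
- by move: fPQ; rewrite (peq_trans hP hfP (etrans (peq_sym _ _) hfQ)).
- have hfPQ : dlt fP Q != 0 by rewrite -peqE; apply/negP/(peq_both_crit (qapply_pnz hP) hfP).
  have hfQP : dlt fQ P != 0 by rewrite -peqE; apply/negP => /peq_both_crit-/(_ (qapply_pnz hQ)).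
  exists (dlt fQ P / dlt fP Q), true, N; split; first by rewrite mulf_neq0 ?invr_eq0.
  split=> //; apply: (qm_equiv_scale hd2 hfPQ); rewrite ?eF ?eG -bf_subst_scale;
    congr bf_subst; rewrite /bf_scale /= ?(peq_dlt hfP) ?(peq_dlt hfQ);
    by congr BF; rewrite ?mulr0 ?mulr1 // mulrC divfK.
- have hfPP : dlt fP P != 0 by rewrite -peqE; apply/negP => /peq_both_crit-/(_ (qapply_pnz hP)).
  have hfQQ : dlt fQ Q != 0 by rewrite -peqE; apply/negP/(peq_both_crit (qapply_pnz hQ) hfQ).
  exists (dlt fP P / dlt fQ Q), false, N; split; first by rewrite mulf_neq0 ?invr_eq0.
  split=> //; apply: (qm_equiv_scale hd2 hfQQ); rewrite ?eF ?eG -bf_subst_scale;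
    congr bf_subst; rewrite /bf_scale /= ?(peq_dlt hfP) ?(peq_dlt hfQ);
    by congr BF; rewrite ?mulr0 ?mulr1 // mulrC divfK.
- by move: fPQ; rewrite (peq_trans hQ hfP (etrans (peq_sym _ _) hfQ)).
Qed.

Lemma cond_b_postcrit_ge3 : cond_b f P Q -> postcrit_ge3 f P Q.
Proof.
have inP n : (0 < n)%N -> in_postcrit f P Q (iter n (qapply f) P).
  by move=> hn; exists n; split=> //; left; apply: peq_refl.
have inQ n : (0 < n)%N -> in_postcrit f P Q (iter n (qapply f) Q).
  by move=> hn; exists n; split=> //; right; apply: peq_refl.
case/orP=> /andP [h1 h2].
- exists fP, fQ, (qapply f fP); split.
    by split; [apply: (inP 1%N) | apply: (inQ 1%N) | apply: (inP 2%N)].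
  by rewrite crit_values_neq peq_sym peq_qapply_critP h1 peq_sym peq_qapply_critQ h2.
- exists fQ, fP, (qapply f fQ); split.
    by split; [apply: (inQ 1%N) | apply: (inP 1%N) | apply: (inQ 2%N)].
  by rewrite peq_sym crit_values_neq peq_sym peq_qapply_critQ h2 peq_sym peq_qapply_critP h1.
Qed.

Lemma qapply_crit_class y : ~~ cond_b f P Q ->
  peq y P || peq y Q -> peq (qapply f y) P || peq (qapply f y) Q.
Proof.
rewrite /cond_b negb_or !negb_and !negbK => /andP [hfP hfQ] /orP [yP | yQ].
- by case/orP: hfP => h; apply/orP; [left | right];
    apply: peq_trans (qapply_pnz hP) (qapply_peq yP) h.
- by case/orP: hfQ => h; apply/orP; [left | right];
    apply: peq_trans (qapply_pnz hQ) (qapply_peq yQ) h.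
Qed.

Lemma postcrit_crit_class z : ~~ cond_b f P Q ->
  in_postcrit f P Q z -> peq z P || peq z Q.
Proof.
move=> hb [n [_ hz]].
have [X [hX XPQ zX]] : exists X, [/\ pnz X, peq X P || peq X Q & peq z (iter n (qapply f) X)].
  by case: hz => hz; [exists P | exists Q]; rewrite peq_refl ?orbT.
have hXn := iter_qapply_pnz n hX.
have : peq (iter n (qapply f) X) P || peq (iter n (qapply f) X) Q.
  by elim: n {hz zX hXn} => //= n; apply: qapply_crit_class.
by case/orP=> h; apply/orP; [left | right]; apply: peq_trans hXn zX h.
Qed.

Lemma postcrit_ge3_cond_b : postcrit_ge3 f P Q -> cond_b f P Q.
Proof.
case=> [z1 [z2 [z3 [[i1 i2 i3] [d12 d13 d23]]]]]; apply: contraT => hb.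
have := peq_pigeonhole hP hQ (postcrit_crit_class hb i1) (postcrit_crit_class hb i2)
  (postcrit_crit_class hb i3).
by rewrite (negbTE d12) (negbTE d13) (negbTE d23).
Qed.

Lemma aut_fixes_postcrit M z :
  qm_iso M f P Q f P Q -> in_postcrit f P Q z -> peq (lm_apply M z) z.
Proof.
case=> hM hiso hMP hMQ [n [_ hz]].
have [X [hX hMX zX]] : exists X, [/\ pnz X, peq (lm_apply M X) X & peq z (iter n (qapply f) X)].
  by case: hz => hz; [exists P | exists Q].
set y := iter n (qapply f) X in zX.
have hy : pnz y := iter_qapply_pnz n hX.
have hMy : peq (lm_apply M y) y.
  have [l _ e] := qm_equiv_dlt hiso.
  rewrite /y; elim: n {hz zX hy y} => //= n IH.
  by rewrite peqE e (peq_dlt (qapply_peq IH)) mulr0.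
have hMzy : peq (lm_apply M z) (lm_apply M y) by rewrite peq_lm_apply.
have yz : peq y z by rewrite peq_sym.
exact: peq_trans hy (peq_trans (pnz_lm_apply hM hy) hMzy hMy) yz.
Qed.

Lemma postcrit_ge3_aut_trivial : postcrit_ge3 f P Q -> aut_trivial f P Q.
Proof.
case=> [z1 [z2 [z3 [[i1 i2 i3] [d12 d13 d23]]]]] M hiso.
by apply: (lm_scalar_of_fixed3 d12 d13 d23); apply: aut_fixes_postcrit hiso _.
Qed.

End QuadMorphism.

Theorem proposition1p4 (K : fieldType) (h2 : (2%:R : K) != 0)
    (f : qmap K) (P Q : pt K) (hf : is_quad_morphism f P Q) :
  (postcrit_ge3 f P Q <-> cond_b f P Q) /\
  (cond_b f P Q <-> ~ is_standard f P Q) /\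
  (postcrit_ge3 f P Q -> aut_trivial f P Q).
Proof.
case: hf => hP hQ hres [c [hc hjac]].
split; [|split].
- by split; [apply: postcrit_ge3_cond_b hjac | apply: cond_b_postcrit_ge3 hjac].
- split=> [hb /standard_not_cond_b | hns]; first by rewrite hb.
  by apply: contraT => hb; case: hns; apply: not_cond_b_standard hjac hb.
- exact: postcrit_ge3_aut_trivial hjac.
Qed.
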